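(* Let $k\geq 3$ and $\mathbf{x}=(x_1,\ldots,x_n)\in\Delta^{n-1}$, and let $q=q(\mathbf{x})$. If $|\mathbf{x}|_{\max}<1/(k-1)$, then \[ S_k(\mathbf{x})>q^k\binom{1/q}{k}, \] unless the nonzero entries of $\mathbf{x}$ are equal.
   Context: $\Delta^{n-1}=\{\mathbf{x}\in\mathbb{R}^n: x_i\geq0 \text{ for all } i,\ \sum_i x_i=1\}$. $S_k(\mathbf{x})$ denotes the $k$-th elementary symmetric polynomial of $x_1,\ldots,x_n$. $q(\mathbf{x})=x_1^2+\cdots+x_n^2$. $|\mathbf{x}|_{\max}=\max_i x_i$. For real $s$, $\binom{s}{k}=s(s-1)\cdots(s-k+1)/k!$. *)

From mathcomp Require Import all_boot all_order all_algebra.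
Set Implicit Arguments. Unset Strict Implicit. Unset Printing Implicit Defensive.
Import Order.TTheory GRing.Theory Num.Theory.
Local Open Scope ring_scope.

Definition in_simplex (R : realFieldType) (n : nat) (x : 'I_n -> R) : Prop :=
  (forall i, 0 <= x i) /\ \sum_(i < n) x i = 1.

Definition elem_sym (R : pzRingType) (n k : nat) (x : 'I_n -> R) : R :=
  \sum_(A : {set 'I_n} | #|A| == k) \prod_(i in A) x i.

Definition sqsum (R : pzRingType) (n : nat) (x : 'I_n -> R) : R :=
  \sum_(i < n) x i ^+ 2.

Definition gbinom (R : fieldType) (s : R) (k : nat) : R :=
  (\prod_(i < k) (s - i%:R)) / (k`!)%:R.

Definition nonzero_entries_equal (R : pzRingType) (n : nat) (x : 'I_n -> R) : Prop :=
  forall i j, x i != 0 -> x j != 0 -> x i = x j.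

(** Write [E_m^(i)] for [S_m] evaluated at [x] with [x_i] replaced by [0], so that
    [E_m^(i) = dS_(m+1)/dx_i].  Euler's identity for the homogeneous [S_(m+1)]
    together with a Chebyshev-type symmetrisation shows that on the simplex
    [2 ((m+2) S_(m+2) - (1 - (m+1) q) S_(m+1))
       = sum_(i,j) x_i x_j (x_i - x_j) (E_m^(j) - E_m^(i))],
    and since [E_(m+1)^(j) - E_(m+1)^(i) = (x_i - x_j) E_m^(ij)] every summand is
    nonnegative, and positive for [m = 1] as soon as two positive entries differ.
    The numbers [F_m = q^m binom(1/q, m)] obey the same recursion with no gap,
    [(m+1) F_(m+1) = (1 - m q) F_m], and [F_1 = S_1 = 1].  Hence [S_m - F_m] stays
    nonnegative, and becomes positive from [m = 3] on, as long as the factors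
    [1 - m q] are positive; this is what [|x|_max < 1/(k-1)] buys, since
    [q < |x|_max] on the simplex. *)

From mathcomp Require Import all_boot all_order all_algebra.
From mathcomp Require Import ring.
Set Implicit Arguments. Unset Strict Implicit. Unset Printing Implicit Defensive.
Import Order.TTheory GRing.Theory Num.Theory.
Local Open Scope ring_scope.

Lemma eq_elem_sym (R : pzRingType) n k (x y : 'I_n -> R) :
  x =1 y -> elem_sym k x = elem_sym k y.
Proof. by move=> e; apply: eq_bigr => A _; apply: eq_bigr => l _; rewrite e. Qed.

Lemma elem_sym0 (R : pzRingType) n (x : 'I_n -> R) : elem_sym 0 x = 1.
Proof.
rewrite /elem_sym (bigD1 set0) ?cards0 //= big_set0 big1 ?addr0 //.
by move=> A /andP[/eqP/cards0_eq ->]; rewrite eqxx.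
Qed.

Lemma elem_sym_ge0 (R : numDomainType) n k (x : 'I_n -> R) :
  (forall i, 0 <= x i) -> 0 <= elem_sym k x.
Proof. by move=> x_ge0; apply: sumr_ge0 => A _; apply: prodr_ge0. Qed.

Definition zero_at (R : pzRingType) n (i : 'I_n) (x : 'I_n -> R) : 'I_n -> R :=
  fun l => if l == i then 0 else x l.

Lemma zero_atC (R : pzRingType) n (i j : 'I_n) (x : 'I_n -> R) :
  zero_at i (zero_at j x) =1 zero_at j (zero_at i x).
Proof. by move=> l; rewrite /zero_at; case: (l == i); case: (l == j). Qed.

Lemma zero_at_ge0 (R : numDomainType) n (i : 'I_n) (x : 'I_n -> R) :
  (forall l, 0 <= x l) -> forall l, 0 <= zero_at i x l.
Proof. by move=> x_ge0 l; rewrite /zero_at; case: ifP. Qed.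

Section ElemSymZeroAt.
Variables (R : comPzRingType) (n : nat).
Implicit Types x : 'I_n -> R.

Lemma prod_zero_at i x (A : {set 'I_n}) :
  \prod_(l in A) zero_at i x l = if i \in A then 0 else \prod_(l in A) x l.
Proof.
case: ifP => iA; first by rewrite (bigD1 i) //= /zero_at eqxx mul0r.
by apply: eq_bigr => l lA; rewrite /zero_at; case: eqP => // li; rewrite li iA in lA.
Qed.

Lemma elem_sym_zero_at k i x : elem_sym k (zero_at i x) =
  \sum_(A : {set 'I_n} | (#|A| == k) && (i \notin A)) \prod_(l in A) x l.
Proof.
rewrite /elem_sym (bigID (fun A : {set 'I_n} => i \in A)) /=.
rewrite big1 ?add0r; last by move=> A /andP[_ iA]; rewrite prod_zero_at iA.
by apply: eq_bigr => A /andP[_ iA]; rewrite prod_zero_at (negbTE iA).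
Qed.

Lemma sum_card_setU1 (F : {set 'I_n} -> R) k i :
  \sum_(A : {set 'I_n} | (#|A| == k.+1) && (i \in A)) F A =
  \sum_(B : {set 'I_n} | (#|B| == k) && (i \notin B)) F (i |: B).
Proof.
rewrite (reindex_onto (fun B => i |: B) (fun A => A :\ i)) /=; last first.
  by move=> A /andP[_ iA]; rewrite setD1K.
apply: eq_bigl => B; rewrite setU11 andbT.
case iB: (i \in B) => /=; last first.
  by rewrite andbT setU1K ?iB // eqxx andbT cardsU1 iB add1n eqSS.
rewrite andbF; apply/negbTE/negP => /andP[_ /eqP iBE].
by move: (setD11 i (i |: B)); rewrite iBE iB.
Qed.

Lemma sum_elem_sym_mem k i x :
  \sum_(A : {set 'I_n} | (#|A| == k.+1) && (i \in A)) \prod_(l in A) x l =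
  x i * elem_sym k (zero_at i x).
Proof.
rewrite sum_card_setU1 elem_sym_zero_at mulr_sumr.
by apply: eq_bigr => B /andP[_ iB]; rewrite big_setU1.
Qed.

Lemma elem_symS_zero_at k i x :
  elem_sym k.+1 x = elem_sym k.+1 (zero_at i x) + x i * elem_sym k (zero_at i x).
Proof.
rewrite -sum_elem_sym_mem elem_sym_zero_at /elem_sym.
by rewrite (bigID (fun A : {set 'I_n} => i \in A)) /= addrC.
Qed.

(* Euler's identity for the homogeneous polynomial [S_(k+1)], whose partial
   derivative in [x_i] is [elem_sym k (zero_at i x)]. *)
Lemma elem_sym_euler k x :
  \sum_i x i * elem_sym k (zero_at i x) = k.+1%:R * elem_sym k.+1 x.
Proof.
under eq_bigr => i _ do rewrite -sum_elem_sym_mem big_mkcondr.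
rewrite exchange_big /= /elem_sym mulr_sumr; apply: eq_bigr => A /eqP cardA.
by rewrite -big_mkcond /= sumr_const cardA mulr_natl.
Qed.

Lemma elem_sym1 x : elem_sym 1 x = \sum_i x i.
Proof.
rewrite -[LHS]mul1r -[1 in LHS]/(1%:R) -elem_sym_euler.
by apply: eq_bigr => i _; rewrite elem_sym0 mulr1.
Qed.

Lemma elem_sym_zero_atB k i j x :
  elem_sym k.+1 (zero_at i x) - elem_sym k.+1 (zero_at j x) =
  (x j - x i) * elem_sym k (zero_at i (zero_at j x)).
Proof.
have [<-|ij] := eqVneq i j; first by rewrite !subrr mul0r.
rewrite (elem_symS_zero_at k j (zero_at i x)) (elem_symS_zero_at k i (zero_at j x)).
rewrite !(eq_elem_sym _ (zero_atC i j x)).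
rewrite /zero_at [j == i]eq_sym (negbTE ij).
ring.
Qed.

End ElemSymZeroAt.

Lemma chebyshev_sum_identity (R : comPzRingType) (I : finType) (w a c : I -> R) :
  2 * ((\sum_i w i * a i * c i) * (\sum_i w i) - (\sum_i w i * a i) * (\sum_i w i * c i))
  = \sum_i \sum_j w i * w j * ((a i - a j) * (c i - c j)).
Proof.
pose A i j := w i * a i * c i * w j.
pose B i j := w i * a i * (w j * c j).
transitivity (\sum_i \sum_j (A i j + A j i - (B i j + B j i))); last first.
  by apply: eq_bigr => i _; apply: eq_bigr => j _; rewrite /A /B; ring.
under [RHS]eq_bigr => i _ do rewrite sumrB !big_split /=.
rewrite sumrB !big_split /= [\sum_i \sum_j A j i]exchange_big.
rewrite [\sum_i \sum_j B j i]exchange_big /= !mulr_suml.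
under [\sum_i _ * \sum_j w j]eq_bigr => i _ do rewrite mulr_sumr.
under [\sum_i _ * \sum_j (w j * c j)]eq_bigr => i _ do rewrite mulr_sumr.
ring.
Qed.

Definition esym_gap (R : comPzRingType) n m (x : 'I_n -> R) :=
  m.+2%:R * elem_sym m.+2 x - (1 - m.+1%:R * sqsum x) * elem_sym m.+1 x.

Lemma esym_gapE (R : comPzRingType) n m (x : 'I_n -> R) : \sum_i x i = 1 ->
  2 * esym_gap m x = \sum_i \sum_j x i * x j *
    ((x i - x j) * (elem_sym m (zero_at j x) - elem_sym m (zero_at i x))).
Proof.
move=> x_sum1; set E := fun i => elem_sym m (zero_at i x).
have Em2 : m.+2%:R * elem_sym m.+2 x = elem_sym m.+1 x - \sum_i x i * x i * E i.
  rewrite -elem_sym_euler.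
  transitivity (\sum_i (x i * elem_sym m.+1 x - x i * x i * E i)).
    by apply: eq_bigr => i _; rewrite (elem_symS_zero_at m i x) /E; ring.
  by rewrite sumrB -mulr_suml x_sum1 mul1r.
have q_sum : sqsum x = \sum_i x i * x i.
  by apply: eq_bigr => i _; rewrite expr2.
transitivity (- \sum_i \sum_j x i * x j * ((x i - x j) * (E i - E j))).
  rewrite -chebyshev_sum_identity /esym_gap Em2 q_sum x_sum1.
  have := elem_sym_euler m x; rewrite -/E => ->.
  ring.
rewrite -sumrN; apply: eq_bigr => i _; rewrite -sumrN; apply: eq_bigr => j _.
by rewrite /E; ring.
Qed.

Lemma esym_gapSE (R : comPzRingType) n m (x : 'I_n -> R) : \sum_i x i = 1 ->
  2 * esym_gap m.+1 x =
  \sum_i \sum_j x i * x j * (x i - x j) ^+ 2 * elem_sym m (zero_at j (zero_at i x)).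
Proof.
move=> x_sum1; rewrite esym_gapE //.
by apply: eq_bigr => i _; apply: eq_bigr => j _; rewrite elem_sym_zero_atB; ring.
Qed.

Lemma psumr_gt0 (R : numDomainType) (I : finType) (F : I -> R) i0 :
  (forall i, 0 <= F i) -> 0 < F i0 -> 0 < \sum_i F i.
Proof.
move=> F_ge0 Fi0; rewrite (bigD1 i0) //=.
by apply: ltr_pwDl => //; apply: sumr_ge0.
Qed.
Arguments psumr_gt0 {R I F} i0.

Section EsymGapSign.
Variables (R : realDomainType) (n : nat) (x : 'I_n -> R).
Hypotheses (x_ge0 : forall i, 0 <= x i) (x_sum1 : \sum_i x i = 1).

Lemma esym_gap_ge0 m : 0 <= esym_gap m x.
Proof.
rewrite -(pmulr_rge0 _ (ltr0Sn _ 1)); case: m => [|m].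
  rewrite esym_gapE // big1 // => i _; rewrite big1 // => j _.
  by rewrite !elem_sym0 subrr !mulr0.
rewrite esym_gapSE //; apply: sumr_ge0 => i _; apply: sumr_ge0 => j _.
apply: mulr_ge0 (mulr_ge0 (mulr_ge0 (x_ge0 i) (x_ge0 j)) (sqr_ge0 _)) _.
by apply: elem_sym_ge0; do 2 apply: zero_at_ge0.
Qed.

Lemma esym_gap1_gt0 i j : 0 < x i -> 0 < x j -> x i != x j -> 0 < esym_gap 1 x.
Proof.
move=> xi_gt0 xj_gt0 xij; rewrite -(pmulr_rgt0 _ (ltr0Sn _ 1)) esym_gapSE //.
under eq_bigr => ? _ do under eq_bigr => ? _ do rewrite elem_sym0 mulr1.
have term_ge0 i' j' : 0 <= x i' * x j' * (x i' - x j') ^+ 2.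
  exact: mulr_ge0 (mulr_ge0 (x_ge0 i') (x_ge0 j')) (sqr_ge0 _).
apply: (psumr_gt0 i) => [i' |]; first exact: sumr_ge0.
apply: (psumr_gt0 j) => //; apply: mulr_gt0; first exact: mulr_gt0.
by rewrite lt0r sqr_ge0 andbT sqrf_eq0 subr_eq0.
Qed.

End EsymGapSign.

Lemma gbinomS (R : numFieldType) (s : R) m :
  m.+1%:R * gbinom s m.+1 = (s - m%:R) * gbinom s m.
Proof.
rewrite /gbinom big_ord_recr /= factS natrM.
have m_fact_neq0 : (m`!)%:R != 0 :> R by rewrite pnatr_eq0 -lt0n fact_gt0.
by field; rewrite m_fact_neq0 addrC natr1 pnatr_eq0.
Qed.

(* When [1/q] is an integer, this is the value of [S_k] at the uniform point of
   the simplex with [1/q] nonzero entries, whose sum of squares is [q]. *)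
Definition flat_esym (R : fieldType) (q : R) k := q ^+ k * gbinom q^-1 k.

Lemma flat_esym1 (R : numFieldType) (q : R) : q != 0 -> flat_esym q 1 = 1.
Proof. by move=> q_neq0; rewrite /flat_esym /gbinom big_ord1 subr0 expr1 divr1 mulfV. Qed.

Lemma flat_esymS (R : numFieldType) (q : R) m : q != 0 ->
  m.+1%:R * flat_esym q m.+1 = (1 - m%:R * q) * flat_esym q m.
Proof. by move=> q_neq0; rewrite /flat_esym exprS mulrCA gbinomS; field. Qed.

Lemma elem_sym_sub_flatS (R : numFieldType) n m (x : 'I_n -> R) : sqsum x != 0 ->
  m.+2%:R * (elem_sym m.+2 x - flat_esym (sqsum x) m.+2) =
  (1 - m.+1%:R * sqsum x) * (elem_sym m.+1 x - flat_esym (sqsum x) m.+1)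
  + esym_gap m x.
Proof. by move=> q_neq0; rewrite /esym_gap mulrBr flat_esymS //; ring. Qed.

Lemma exists_distinct_nonzero_entries (R : pzRingType) n (x : 'I_n -> R) :
  ~ nonzero_entries_equal x -> exists i j, [/\ x i != 0, x j != 0 & x i != x j].
Proof.
move=> not_equal.
case: (boolP [exists i, exists j, [&& x i != 0, x j != 0 & x i != x j]]).
  by case/existsP=> i /existsP[j /and3P[]]; exists i, j.
move/existsPn=> all_equal; case: not_equal => i j xi_neq0 xj_neq0; apply/eqP.
by move/existsPn: (all_equal i) => /(_ j); rewrite xi_neq0 xj_neq0 negbK.
Qed.

Section Simplex.
Variables (R : realFieldType) (n : nat) (x : 'I_n -> R).
Hypothesis x_simplex : in_simplex x.
Let x_ge0 : forall i, 0 <= x i := x_simplex.1.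
Let x_sum1 : \sum_i x i = 1 := x_simplex.2.

Lemma simplex_pos_entry : exists i, 0 < x i.
Proof.
have sum_neq0 : \sum_i x i <> 0 by rewrite x_sum1; exact/eqP/oner_neq0.
by have [i /andP[_ xi_gt0]] := psumr_neq0P (fun i _ => x_ge0 i) sum_neq0; exists i.
Qed.

Lemma sqsum_gt0 : 0 < sqsum x.
Proof.
have [i xi_gt0] := simplex_pos_entry.
by apply: (psumr_gt0 i) => [l|]; [exact: sqr_ge0 | exact: exprn_gt0].
Qed.

Lemma sqsum_lt M : (forall i, x i < M) -> sqsum x < M.
Proof.
move=> x_lt; rewrite -subr_gt0.
have -> : M - sqsum x = \sum_i x i * (M - x i).
  under eq_bigr => i _ do rewrite mulrBr.
  by rewrite sumrB -mulr_suml x_sum1 mul1r; congr (_ - _); apply: eq_bigr => i _.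
have [i xi_gt0] := simplex_pos_entry.
apply: (psumr_gt0 i) => [l|]; first by rewrite mulr_ge0 ?x_ge0 // subr_ge0 ltW.
by rewrite mulr_gt0 ?subr_gt0.
Qed.

Let q_gt0 := sqsum_gt0.
Let q_neq0 : sqsum x != 0 := lt0r_neq0 q_gt0.

Lemma ler_natM_sqsum a b : (a <= b)%N -> a%:R * sqsum x <= b%:R * sqsum x.
Proof. by move=> ab; rewrite ler_pM2r // ler_nat. Qed.

Lemma flat_esym_le_elem_sym m :
  m%:R * sqsum x <= 1 -> flat_esym (sqsum x) m.+1 <= elem_sym m.+1 x.
Proof.
elim: m => [|m IH] qm_le1; first by rewrite flat_esym1 // elem_sym1 x_sum1.
rewrite -subr_ge0 -(pmulr_rge0 _ (ltr0Sn _ m.+1)) elem_sym_sub_flatS //.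
apply: addr_ge0; last exact: esym_gap_ge0.
apply: mulr_ge0; first by rewrite subr_ge0.
by rewrite subr_ge0 IH // (le_trans _ qm_le1) // ler_natM_sqsum.
Qed.

Lemma flat_esym_lt_elem_sym i j m : 0 < x i -> 0 < x j -> x i != x j ->
  m.+2%:R * sqsum x < 1 -> flat_esym (sqsum x) m.+3 < elem_sym m.+3 x.
Proof.
move=> xi_gt0 xj_gt0 xij; elim: m => [|m IH] qm_lt1.
  rewrite -subr_gt0 -(pmulr_rgt0 _ (ltr0Sn _ 2)) elem_sym_sub_flatS //.
  apply: ltr_wpDl (esym_gap1_gt0 x_ge0 x_sum1 xi_gt0 xj_gt0 xij).
  apply: mulr_ge0; first by rewrite subr_ge0 ltW.
  rewrite subr_ge0 flat_esym_le_elem_sym //.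
  by rewrite (le_trans _ (ltW qm_lt1)) // ler_natM_sqsum.
rewrite -subr_gt0 -(pmulr_rgt0 _ (ltr0Sn _ m.+3)) elem_sym_sub_flatS //.
apply: ltr_wpDr; first exact: esym_gap_ge0.
rewrite mulr_gt0 // subr_gt0 ?IH //.
by rewrite (le_lt_trans _ qm_lt1) // ler_natM_sqsum.
Qed.

End Simplex.

Theorem theorem3 (R : realFieldType) (n k : nat) (x : 'I_n -> R) :
  (3 <= k)%N ->
  in_simplex x ->
  (forall i, x i < 1 / (k%:R - 1)) ->
  ~ nonzero_entries_equal x ->
  elem_sym k x > sqsum x ^+ k * gbinom (sqsum x)^-1 k.
Proof.
move=> k_ge3 x_simplex x_lt /exists_distinct_nonzero_entries[i [j [xi_neq0 xj_neq0 xij]]].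
have x_gt0 l : x l != 0 -> 0 < x l by rewrite lt0r => ->; apply: x_simplex.1.
case: k k_ge3 x_lt => [|[|[|m]]] // _ x_lt.
apply: (flat_esym_lt_elem_sym x_simplex (x_gt0 i xi_neq0) (x_gt0 j xj_neq0) xij).
have := sqsum_lt x_simplex x_lt.
by rewrite -natr1 addrK ltr_pdivlMr // mulrC.
Qed.
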